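(* Let $1\le s\le n$. Let $\mathcal{N}(n,s)$ be the set of two-colour necklaces of length $n$ with exactly $s$ beads of colour $0$ and $n-s$ beads of colour $1$, and let $\mathcal{E}(n,s)$ be the set of canonical representative increment arrays of size $s$ for $n$ agents. The map sending a necklace to $\Phi(a)$, where $a=a_1\cdots a_n$ is its lexicographically smallest representative string, is a bijection $\mathcal{N}(n,s)\to\mathcal{E}(n,s)$. Here, for a binary string $a$ with $a_1=0$ containing exactly $s$ zeros, written uniquely as $a=0\,1^{t_0}\,0\,1^{t_1}\cdots 0\,1^{t_{s-1}}$ with $t_i\ge 0$, the run-length encoding is $\Phi(a)=\langle t_0,t_1,\ldots,t_{s-1}\rangle$ (so $t_i$ is the number of consecutive $1$s following the $(i+1)$-th $0$, the last count including the trailing $1$s at the end of the string).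
   Context: A two-colour necklace of length $n$ is an equivalence class of binary strings of length $n$ under cyclic rotation; its canonical (lexicographically smallest) representative is the least string in the class under lexicographic order with $0<1$. An increment array (IA) of size $s$ for $n$ agents is a tuple $\underline{t}=\langle t_0,\ldots,t_{s-1}\rangle$ of non-negative integers with $\sum t_i=n-s$. Two IAs of the same size are equivalent if one is a circular shift of the other, i.e.\ $\langle u_0,\ldots,u_{s-1}\rangle=\langle t_k,\ldots,t_{s-1},t_0,\ldots,t_{k-1}\rangle$ for some $0\le k\le s-1$; the canonical representative of an equivalence class is its lexicographically smallest member, and $\mathcal{E}(n,s)$ is the set of these canonical representatives. *)

From mathcomp Require Import all_boot.
Set Implicit Arguments. Unset Strict Implicit. Unset Printing Implicit Defensive.

(* Binary strings: colour 0 = false, colour 1 = true (so 0 < 1 means false < true). *)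

Fixpoint lexle (T : eqType) (lt : rel T) (a b : seq T) : bool :=
  match a, b with
  | [::], _ => true
  | _ :: _, [::] => false
  | x :: a', y :: b' => lt x y || ((x == y) && lexle lt a' b')
  end.

Definition ltb (x y : bool) : bool := ~~ x && y.

Definition necklace_of (n : nat) (a : n.-tuple bool) : {set n.-tuple bool} :=
  [set b : n.-tuple bool | [exists k : 'I_n, val b == rot k a]].

Definition Necklaces (n s : nat) : {set {set n.-tuple bool}} :=
  [set necklace_of a | a in [set a : n.-tuple bool | count negb a == s]].

Definition min_rep (n : nat) (C : {set n.-tuple bool}) : seq bool :=
  odflt [::] (omap val [pick a in C | [forall b in C, lexle ltb (val a) (val b)]]).

(* Computed right-to-left: the state is
   (number of pending 1s, list of counts already produced). *)
Definition rle_step (b : bool) (st : nat * seq nat) : nat * seq nat :=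
  if b then (st.1.+1, st.2) else (0, st.1 :: st.2).
Definition Phi (a : seq bool) : seq nat := (foldr rle_step (0, [::]) a).2.

Definition is_IA (n s : nat) (t : seq nat) : bool :=
  (size t == s) && (sumn t == n - s).

Definition is_canonical_IA (t : seq nat) : bool :=
  all (fun k => lexle ltn t (rot k t)) (iota 0 (size t)).

Definition in_E (n s : nat) (t : seq nat) : bool := is_IA n s t && is_canonical_IA t.

Definition neck_to_IA (n : nat) (C : {set n.-tuple bool}) : seq nat := Phi (min_rep C).

From mathcomp Require Import all_boot.
Set Implicit Arguments. Unset Strict Implicit. Unset Printing Implicit Defensive.

(* Write Phi_inv t for the string 0 1^t_0 0 1^t_1 ... 0 1^t_(s-1).  Phi_inv is an
   order embedding of sequences of naturals (lexicographic, with <) into binary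
   strings, whose image consists of the strings not starting with 1; moreover the
   rotations of Phi_inv t that start with 0 are exactly the strings
   Phi_inv (rot k t).  Hence Phi_inv t is lexicographically least among its
   rotations iff t is, and a string that is least among its rotations and
   contains a 0 starts with 0.  So the least representative m of a necklace with
   s zeros satisfies m = Phi_inv (Phi m) with Phi m canonical, which gives
   well-definedness and injectivity; conversely, for a canonical t the string
   Phi_inv t is the least representative of its own necklace. *)

Section Lexle.
Variables (T : eqType) (lt : rel T).
Hypotheses (ltxx : irreflexive lt) (lt_trans : transitive lt)
  (lt_total : forall x y, x != y -> lt x y || lt y x).

Lemma lexle_refl : reflexive (lexle lt).
Proof. by elim=> //= x a ->; rewrite eqxx orbT. Qed.

Lemma lexle_anti : antisymmetric (lexle lt).
Proof.
elim=> [|x a IH] [|y b] //=.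
case/andP=> /orP[lt_xy|/andP[/eqP-> le_ab]] /orP[lt_yx|/andP[/eqP eq_yx le_ba]].
- by move: (lt_trans lt_xy lt_yx); rewrite ltxx.
- by move: lt_xy; rewrite eq_yx ltxx.
- by rewrite ltxx in lt_yx.
- by rewrite (IH b) // le_ab le_ba.
Qed.

Lemma lexle_trans : transitive (lexle lt).
Proof.
move=> b a c; elim: a b c => [|x a IH] [|y b] [|z c] //=.
case/orP=> [lt_xy|/andP[/eqP-> le_ab]].
  by case/orP=> [/(lt_trans lt_xy)->|/andP[/eqP<- _]]; rewrite ?lt_xy.
case/orP=> [->//|/andP[/eqP-> le_bc]].
by rewrite eqxx (IH _ _ le_ab le_bc) orbT.
Qed.

Lemma lexle_total : total (lexle lt).
Proof.
elim=> [|x a IH] [|y b] //=.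
have [->|neq_xy] := eqVneq x y; first by case/orP: (IH b) => ->; rewrite !orbT.
by case/orP: (lt_total neq_xy) => ->; rewrite ?orbT.
Qed.

Definition rot_minimal (s : seq T) := forall k, lexle lt s (rot k s).

Lemma exists_rot_minimal s : exists k, rot_minimal (rot k s).
Proof.
(* Indices range up to [size s] included, so that the index type is never empty. *)
have [i _ min_i] := extremumP (fun i : 'I_(size s).+1 => rot i s)
  lexle_refl lexle_trans lexle_total (isT : xpredT ord0).
exists i => j; rewrite rot_rot_add.
have /= := min_i (inord (rot_add s i j)) isT.
by rewrite inordK // ltnS leq_rot_add.
Qed.

End Lexle.

Lemma ltb_irr : irreflexive ltb. Proof. by case. Qed.
Lemma ltb_trans : transitive ltb. Proof. by do 3 case. Qed.
Lemma ltb_total x y : x != y -> ltb x y || ltb y x. Proof. by case: x; case: y. Qed.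

Lemma is_canonical_IAP t : reflect (rot_minimal ltn t) (is_canonical_IA t).
Proof.
apply: (iffP allP) => [tmin k|tmin k _]; last exact: tmin.
have [lt_k|ge_k] := ltnP k (size t); first by apply: tmin; rewrite mem_iota.
by rewrite rot_oversize // lexle_refl.
Qed.

Definition Phi_inv (t : seq nat) : seq bool :=
  flatten [seq false :: nseq x true | x <- t].

Lemma Phi_inv_cat t u : Phi_inv (t ++ u) = Phi_inv t ++ Phi_inv u.
Proof. by rewrite /Phi_inv map_cat flatten_cat. Qed.

Lemma size_Phi_inv t : size (Phi_inv t) = size t + sumn t.
Proof. by elim: t => //= x t IH; rewrite size_cat size_nseq IH addnCA. Qed.

Lemma count_Phi_inv t : count negb (Phi_inv t) = size t.
Proof. by elim: t => //= x t IH; rewrite count_cat count_nseq IH. Qed.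

Lemma Phi_invK : cancel Phi_inv Phi.
Proof.
have ones x t : foldr rle_step (0, t) (nseq x true) = (x, t).
  by elim: x => //= x ->.
move=> t; rewrite /Phi; suff -> : foldr rle_step (0, [::]) (Phi_inv t) = (0, t) by [].
by elim: t => //= x t IH; rewrite foldr_cat IH ones.
Qed.

Lemma PhiK a : head true a = false -> Phi_inv (Phi a) = a.
Proof.
have leading_ones b : nseq (foldr rle_step (0, [::]) b).1 true ++ Phi_inv (Phi b) = b.
  by rewrite /Phi; elim: b => // -[] b /=; case: (foldr _ _ b) => k l /= <-.
by case: a => // -[] // a _; rewrite -[RHS]leading_ones.
Qed.

(* [~~ head false A] says that A does not start with a 1. *)
Lemma lexle_nseq_true x y (A B : seq bool) : ~~ head false A -> ~~ head false B ->
  lexle ltb (nseq x true ++ A) (nseq y true ++ B) =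
  (x < y) || (x == y) && lexle ltb A B.
Proof.
move=> A_0 B_0; elim: x y => [|x IH] [|y] //=.
- by case: A A_0 => [|[] A].
- by case: B B_0 {IH} => [|[] B].
Qed.

Lemma Phi_inv_head t : ~~ head false (Phi_inv t).
Proof. by case: t. Qed.

Lemma lexle_Phi_inv t u : lexle ltb (Phi_inv t) (Phi_inv u) = lexle ltn t u.
Proof.
elim: t u => [|x t IH] [|y u] //=.
by rewrite lexle_nseq_true ?Phi_inv_head // IH.
Qed.

Lemma rot_Phi_inv t k :
  rot (size (Phi_inv (take k t))) (Phi_inv t) = Phi_inv (rot k t).
Proof. by rewrite -{2}(cat_take_drop k t) Phi_inv_cat rot_size_cat /rot Phi_inv_cat. Qed.

Lemma nth_Phi_inv_false t j : nth true (Phi_inv t) j = false ->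
  exists k, j = size (Phi_inv (take k t)).
Proof.
elim: t j => [|x t IH] [|j] //=; first by exists 0.
rewrite nth_cat size_nseq; case: ltnP => [lt_jx|le_xj]; first by rewrite nth_nseq lt_jx.
case/IH=> k ej; exists k.+1.
by rewrite /= size_cat size_nseq -ej subnKC.
Qed.

Lemma head_rot (T : Type) (x0 : T) s j :
  j < size s -> head x0 (rot j s) = nth x0 s j.
Proof. by move=> lt_j; rewrite -nth0 nth_cat size_drop subn_gt0 lt_j nth_drop addn0. Qed.

Lemma rot_Phi_inv_head t j : head true (rot j (Phi_inv t)) = false ->
  exists k, rot j (Phi_inv t) = Phi_inv (rot k t).
Proof.
have [lt_j|ge_j] := ltnP j (size (Phi_inv t)); last first.
  by exists 0; rewrite rot0 rot_oversize.
by rewrite head_rot // => /nth_Phi_inv_false[k ->]; exists k; exact: rot_Phi_inv.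
Qed.

Lemma rot_minimal_Phi_inv t : rot_minimal ltb (Phi_inv t) <-> rot_minimal ltn t.
Proof.
split=> tmin k.
  by rewrite -lexle_Phi_inv -rot_Phi_inv.
case e: (head true (rot k (Phi_inv t))); last first.
  by have [j ->] := rot_Phi_inv_head e; rewrite lexle_Phi_inv.
(* Otherwise the rotation is larger already at its first letter. *)
move: e; case: (Phi_inv t) (Phi_inv_head t) => [|[] a] // _.
by case: (rot k _) (size_rot k (false :: a)) => [|[] r].
Qed.

Lemma rot_minimal_head a : rot_minimal ltb a -> false \in a -> head true a = false.
Proof.
move=> amin /rot_to[i r rot_i]; move: (amin i); rewrite rot_i.
by case: a {amin} rot_i => [|[] a].
Qed.

Lemma in_E_Phi m : head true m = false -> rot_minimal ltb m ->
  in_E (size m) (count negb m) (Phi m).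
Proof.
move=> m_0 mmin; rewrite -[in size m](PhiK m_0) -[in count _ m](PhiK m_0).
rewrite /in_E /is_IA size_Phi_inv count_Phi_inv addKn !eqxx /=.
by apply/is_canonical_IAP/rot_minimal_Phi_inv; rewrite PhiK.
Qed.

Section Necklaces.
Variable n : nat.
Implicit Types (a b m : n.-tuple bool) (C : {set n.-tuple bool}).

Lemma necklaceP a b : 0 < n ->
  reflect (exists k, val b = rot k a) (b \in necklace_of a).
Proof.
move=> n_gt0; rewrite inE; apply: (iffP existsP) => [[k /eqP->]|[k ->]].
  by exists k.
have [lt_kn|ge_kn] := ltnP k n; first by exists (Ordinal lt_kn).
by exists (Ordinal n_gt0); rewrite rot0 rot_oversize ?size_tuple.
Qed.

Lemma necklace_of_refl a : 0 < n -> a \in necklace_of a.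
Proof. by move=> n_gt0; apply/necklaceP => //; exists 0; rewrite rot0. Qed.

Lemma necklace_of_eq a b : b \in necklace_of a -> necklace_of b = necklace_of a.
Proof.
move=> ba; have n_gt0 : 0 < n.
  by move: ba; rewrite inE => /existsP[[k lt_kn] _]; exact: leq_ltn_trans lt_kn.
have sub a' b' : b' \in necklace_of a' -> necklace_of b' \subset necklace_of a'.
  move=> /necklaceP[//|k vb]; apply/subsetP => c /necklaceP[//|j vc].
  by apply/necklaceP => //; rewrite vc vb rot_rot_add; eexists.
apply/eqP; rewrite eqEsubset sub //=; apply: sub.
have /necklaceP[//|k vb] := ba; apply/necklaceP => //.
by exists (size b - k); rewrite vb; exact: esym (rotK k a).
Qed.

Lemma min_repE C m : m \in C -> {in C, forall b, lexle ltb (val m) (val b)} ->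
  min_rep C = val m.
Proof.
move=> mC mmin; rewrite /min_rep; case: pickP => [m' /andP[m'C /forall_inP m'min]|].
  by apply: (lexle_anti ltb_irr ltb_trans); rewrite m'min ?mmin.
by move/(_ m); rewrite mC (introT forall_inP mmin).
Qed.

Lemma min_rep_necklace_of a : 0 < n -> rot_minimal ltb a ->
  min_rep (necklace_of a) = val a.
Proof.
move=> n_gt0 amin; apply: min_repE; first exact: necklace_of_refl.
by move=> b /necklaceP[//|k ->].
Qed.

Lemma Necklaces_min_rep s C : 0 < s -> C \in Necklaces n s ->
  exists m, [/\ C = necklace_of m, count negb m = s, head true m = false,
    rot_minimal ltb m & min_rep C = val m].
Proof.
move=> s_gt0 /imsetP[a]; rewrite inE => /eqP a_s ->.
have n_gt0 : 0 < n.
  by rewrite -(size_tuple a); apply: leq_trans (count_size negb a); rewrite a_s.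
have [k kmin] := exists_rot_minimal ltb_trans ltb_total a.
pose m := [tuple of rot k a].
have am : m \in necklace_of a by apply/necklaceP => //; exists k.
have m_s : count negb m = s by rewrite -a_s; apply/permP; rewrite perm_rot.
exists m; rewrite -(necklace_of_eq am) min_rep_necklace_of //; split=> //.
apply: rot_minimal_head kmin _.
by have /hasP[[]] : has negb m by rewrite has_count m_s.
Qed.

End Necklaces.

Theorem proposition11 (n s : nat) (hs1 : 1 <= s) (hsn : s <= n) :
  [/\ {in Necklaces n s, forall C, in_E n s (neck_to_IA C)},
      {in Necklaces n s &, injective (@neck_to_IA n)} &
      forall t : seq nat, in_E n s t ->
        exists2 C, C \in Necklaces n s & neck_to_IA C = t].
Proof.
have n_gt0 : 0 < n := leq_trans hs1 hsn.
split.
- rewrite /neck_to_IA => C /(Necklaces_min_rep hs1)[m [_ <- m_0 mmin ->]].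
  by have := in_E_Phi m_0 mmin; rewrite size_tuple.
- rewrite /neck_to_IA => C1 C2 /(Necklaces_min_rep hs1)[m1 [-> _ m1_0 _ ->]].
  move=> /(Necklaces_min_rep hs1)[m2 [-> _ m2_0 _ ->]].
  by move=> /(congr1 Phi_inv); rewrite !PhiK // => /val_inj->.
- move=> t /andP[/andP[/eqP t_s /eqP t_sum] /is_canonical_IAP tmin].
  have t_n : size (Phi_inv t) == n by rewrite size_Phi_inv t_s t_sum subnKC.
  pose a := Tuple t_n.
  exists (necklace_of a); first by apply/imsetP; exists a; rewrite // inE count_Phi_inv t_s.
  rewrite /neck_to_IA min_rep_necklace_of //; first exact: Phi_invK.
  exact/rot_minimal_Phi_inv.
Qed.
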